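(* Let $f:\mathbb{R}^n\times\mathbb{R}\to\mathbb{R}^n$ be $C^1$, let $\lambda_-<\lambda_+$, let $\Lambda$ be a parameter shift from $\lambda_-$ to $\lambda_+$, and let $r>0$. Let $\Phi$ be the solution cocycle of $\dot x=f(x,\Lambda(rt))$ and $\phi_-$ the flow of $\dot x=f(x,\lambda_-)$. Assume $A_-$ is an asymptotically stable attractor for $\phi_-$. For $\eta>0$ and $t\in\mathbb{R}$ define $$A_t^{\eta}:=\bigcap_{\tau>0}\overline{\bigcup_{s\le-\tau}\Phi\big(t,s,\mathcal{N}_\eta(A_-)\big)}.$$ Then there is $\tilde\eta>0$ such that the nonautonomous set $\{A^\eta_t\}_{t\in\mathbb{R}}$ is independent of $\eta$ for $\eta\in(0,\tilde\eta]$, i.e. $A_t^\eta=A_t^{\eta'}$ for all $t\in\mathbb{R}$ and all $\eta,\eta'\in(0,\tilde\eta]$.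
   Context: A parameter shift from $\lambda_-$ to $\lambda_+$ is a smooth $\Lambda:\mathbb{R}\to(\lambda_-,\lambda_+)$ with $\lim_{\tau\to\pm\infty}\Lambda(\tau)=\lambda_\pm$ and $\lim_{\tau\to\pm\infty}\Lambda'(\tau)=0$. Solutions are assumed to exist for all time; $\Phi(t,s,x_0)$ is the value at time $t$ of the solution with $x(s)=x_0$. $d(X,Y)=\sup_{x\in X}\inf_{y\in Y}\|x-y\|$ and $\mathcal{N}_\eta(M)=\{x: d(x,M)<\eta\}$. A compact $\phi_-$-invariant set $M$ is asymptotically stable if (i) for every $\epsilon>0$ there is $\delta>0$ with $d(\phi_-(t,y),M)<\epsilon$ for all $t>0$, $y\in\mathcal{N}_\delta(M)$, and (ii) there is $\eta>0$ with $\lim_{t\to\infty}d(\phi_-(t,y),M)=0$ for all $y\in\mathcal{N}_\eta(M)$. *)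

From HB Require Import structures.
From mathcomp Require Import all_boot all_order all_algebra.
From mathcomp Require Import all_classical all_reals all_analysis.
Set Implicit Arguments. Unset Strict Implicit. Unset Printing Implicit Defensive.
Import Order.TTheory GRing.Theory Num.Theory.
Import numFieldNormedType.Exports.
Local Open Scope classical_set_scope.
Local Open Scope ring_scope.

Definition enorm {R : realType} {n : nat} (x : 'rV[R]_n) : R :=
  Num.sqrt (\sum_(i < n) x ord0 i ^+ 2).

(* N_eta(M) = {x : d(x,M) < eta}; d(x,M) = inf_{y in M} ||x-y|| < eta
   unfolds to: some y in M has ||x - y|| < eta. *)
Definition nbhd_set {R : realType} {n : nat} (eta : R) (M : set 'rV[R]_n)
  : set 'rV[R]_n := [set x | exists2 y, M y & enorm (x - y) < eta].

Definition C1 {R : realType} {n : nat} (f : 'rV[R]_n * R -> 'rV[R]_n) : Prop :=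
  forall v : 'rV[R]_n * R,
    (forall p, derivable f p v) /\ continuous (fun p => 'D_v f p).

Definition smooth {R : realType} (g : R -> R) : Prop :=
  forall k x, derivable (derive1n k g) x 1.

Definition parameter_shift {R : realType} (lm lp : R) (L : R -> R) : Prop :=
  smooth L /\
  (forall t, lm < L t < lp) /\
  (L x @[x --> -oo] --> lm) /\
  (L x @[x --> +oo] --> lp) /\
  (derive1 L x @[x --> -oo] --> 0) /\
  (derive1 L x @[x --> +oo] --> 0).

(* Phi t s x0 : value at t of the solution of x' = f(x, L(r t)) with x(s) = x0
   (solutions exist for all time). *)
Definition solution_cocycle {R : realType} {n : nat}
  (f : 'rV[R]_n * R -> 'rV[R]_n) (L : R -> R) (r : R)
  (Phi : R -> R -> 'rV[R]_n -> 'rV[R]_n) : Prop :=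
  forall s x0, Phi s s x0 = x0 /\
    forall t : R, is_derive t (1 : R) (fun u => Phi u s x0) (f (Phi t s x0, L (r * t))).

Definition autonomous_flow {R : realType} {n : nat}
  (f : 'rV[R]_n * R -> 'rV[R]_n) (lm : R)
  (phi : R -> 'rV[R]_n -> 'rV[R]_n) : Prop :=
  forall y, phi 0 y = y /\
    forall t : R, is_derive t (1 : R) (fun u => phi u y) (f (phi t y, lm)).

Definition flow_invariant {R : realType} {n : nat}
  (phi : R -> 'rV[R]_n -> 'rV[R]_n) (M : set 'rV[R]_n) : Prop :=
  forall t, phi t @` M = M.

(* Asymptotic stability, with d(z,M) < e unfolded to "exists m in M,
   ||z - m|| < e", and lim d(phi t y, M) = 0 unfolded accordingly. *)
Definition asymptotically_stable {R : realType} {n : nat}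
  (phi : R -> 'rV[R]_n -> 'rV[R]_n) (M : set 'rV[R]_n) : Prop :=
  [/\ compact M, flow_invariant phi M,
      (forall eps : R, 0 < eps -> exists2 delta : R, 0 < delta &
         forall t y, 0 < t -> nbhd_set delta M y -> nbhd_set eps M (phi t y)) &
      (exists2 eta : R, 0 < eta &
         forall y, nbhd_set eta M y ->
           forall eps : R, 0 < eps ->
             \forall t \near +oo, nbhd_set eps M (phi t y))].

Definition pullback_set {R : realType} {n : nat}
  (Phi : R -> R -> 'rV[R]_n -> 'rV[R]_n) (A : set 'rV[R]_n) (eta t : R)
  : set 'rV[R]_n :=
  \bigcap_(tau in [set tau : R | 0 < tau])
    closure (\bigcup_(s in [set s : R | s <= - tau])
               (Phi t s @` nbhd_set eta A)).

(* Monotonicity in eta gives one inclusion.  For the other, pick eta' so small that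
   trajectories of the frozen system x' = f(x, lm) starting in N_eta'(A) stay bounded and
   converge to A.  By compactness of the closure of N_eta'(A) they all enter N_(eta/2)(A) at a
   common time T.  As Lambda(r s) -> lm for s -> -oo, Gronwall's inequality makes
   Phi(s + T, s, .) uniformly (eta/2)-close to phi_-(T, .) for s very negative, so
   Phi(s + T, s) maps N_eta'(A) into N_eta(A), and the cocycle property turns this into
   A_t^eta' included in A_t^eta.  Gronwall also gives uniqueness of solutions (hence the
   cocycle and flow identities) and continuous dependence on initial data, once f is shown
   to be Lipschitz on compact sets from the continuity of its partial derivatives. *)

From HB Require Import structures.
From mathcomp Require Import all_boot all_order all_algebra.
From mathcomp Require Import all_classical all_reals all_analysis.
From mathcomp Require Import ring lra.
Import Order.TTheory GRing.Theory Num.Theory.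
Import numFieldNormedType.Exports.
Local Open Scope classical_set_scope.
Local Open Scope ring_scope.
Set Implicit Arguments. Unset Strict Implicit. Unset Printing Implicit Defensive.

Section real_line.
Variable R : realType.
Implicit Types h : R -> R.

Lemma real_induction (a b : R) (P : R -> Prop) : a <= b ->
  (forall t, a <= t <= b -> (forall s, a <= s < t -> P s) ->
     P t /\ exists2 d, 0 < d & forall s, t <= s < t + d -> P s) ->
  forall t, a <= t <= b -> P t.
Proof.
move=> ab step.
pose S := [set x | a <= x <= b /\ forall s, a <= s < x -> P s].
have Sa : S a by split=> [|s]; [rewrite lexx ab | lra].
have supS : has_sup S by split; [exists a | exists b => x [/andP[]]].
set c := sup S.
have ac : a <= c by exact: sup_upper_bound.
have cb : c <= b by apply: ge_sup; [exists a | move=> x [/andP[]]].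
have P_below_c s : a <= s < c -> P s.
  move=> /andP[a_s sc].
  have [x [_ Px] xs] := sup_adherent (eps := c - s) ltac:(by rewrite subr_gt0) supS.
  by apply: Px; rewrite a_s /=; move: xs; rewrite /c; lra.
have [Pc [d d0 Pd]] := step c ltac:(by rewrite ac cb) P_below_c.
have cE : c = b.
  apply/eqP; rewrite eq_le cb leNgt; apply/negP => cb'.
  pose x := Order.min (c + d / 2) b.
  have Sx : S x.
    split=> [|s /andP[a_s sx]]; first by rewrite /x le_min ge_min lexx orbT; lra.
    have [sc|cs] := ltP s c; first by apply: P_below_c; rewrite a_s sc.
    by apply: Pd; rewrite cs /=; move: sx; rewrite /x lt_min => /andP[? _]; lra.
  have : x <= c by exact: sup_upper_bound.
  by rewrite /x ge_min; apply/negP; rewrite negb_or -!ltNge; lra.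
move=> t /andP[a_t tb]; have [tc|ct] := ltP t c; first by apply: P_below_c; rewrite a_t tc.
by have -> : t = c by lra.
Qed.

Lemma continuous_gt_near (h : R -> R) (t z : R) : {for t, continuous h} -> z < h t ->
  exists2 d, 0 < d & forall s, `|s - t| < d -> z < h s.
Proof.
move=> ht zh.
have /nbhs_ballP[d /= d0 hd] : \forall s \near t, z < h s.
  by apply: (@cvgr_gt _ _ (nbhs t) _ h (h t)).
by exists d => // s st; apply: hd; rewrite /ball /= distrC.
Qed.

Lemma continuous_gt0_right h (t : R) : {for t, continuous h} -> 0 < h t ->
  exists2 e, 0 < e & forall s, t <= s < t + e -> 0 < h s.
Proof.
move=> ht ht0; have [e e0 He] := continuous_gt_near ht ht0.
by exists e => // s /andP[ts st]; apply: He; rewrite ger0_norm; lra.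
Qed.

Lemma continuous_ge0_left h (a t : R) : {for t, continuous h} -> a < t ->
  (forall s, a <= s < t -> 0 < h s) -> 0 <= h t.
Proof.
move=> ht a_t h_gt0; rewrite leNgt; apply/negP => ht0.
have [|e e0 He] := @continuous_gt_near (fun s => - h s) t 0 (continuousN ht).
  by rewrite oppr_gt0.
pose m := Order.min e (t - a).
have m0 : 0 < m by rewrite lt_min e0 subr_gt0.
have [me ma] : m <= e /\ m <= t - a by rewrite !ge_min !lexx ?orbT.
have hs : `|t - m / 2 - t| < e by rewrite addrAC subrr add0r normrN gtr0_norm; lra.
by have := He _ hs; have := h_gt0 (t - m / 2) ltac:(apply/andP; split; lra); lra.
Qed.

End real_line.

Section derivative_estimates.
Variable R : realType.
Context {V : normedModType R}.
Implicit Types d : R -> V.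

Lemma is_derive_continuous d (t : R) (dd : V) : is_derive t 1 d dd -> {for t, continuous d}.
Proof.
by move=> D; apply/differentiable_continuous/derivable1_diffP; exact: (@ex_derive _ _ _ _ _ _ _ D).
Qed.

Lemma is_derive_approx d (t : R) (dd : V) : is_derive t 1 d dd ->
  forall g, 0 < g -> exists2 r, 0 < r & forall h, h != 0 -> `|h| < r ->
     `|d (h + t) - d t - h *: dd| <= g * `|h|.
Proof.
move=> D g g0.
have := @ex_derive _ _ _ _ _ _ _ D; rewrite /derivable -(@derive_val _ _ _ _ _ _ _ D).
move=> /cvgr_dist_lt /(_ g g0) /nbhs_ballP[r /= r0 Hr]; exists r => // h h0 hr.
have := Hr h; rewrite /ball /= sub0r normrN => /(_ hr h0).
rewrite /= [h *: 1]mulr1 addrC; set X := d (h + t) - d t => Hlt.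
have -> : X - h *: derive d t 1 = - (h *: (derive d t 1 - h^-1 *: X)).
  by rewrite scalerBr scalerA mulfV // scale1r opprB.
rewrite normrN normrZ mulrC ler_wpM2r //; apply: ltW; move: Hlt; rewrite addrC; exact.
Qed.

Lemma is_derive_comp_shift (g : R -> V) (c t : R) (dg : V) :
  is_derive (t - c) 1 g dg -> is_derive t 1 (fun s => g (s - c)) dg.
Proof.
move=> D.
have eq : (fun h : R => h^-1 *: (((fun s => g (s - c)) \o shift t) (h *: (1:R)) - g (t - c)))
  = (fun h : R => h^-1 *: ((g \o shift (t - c)) (h *: (1:R)) - g (t - c))).
  by apply/funext => h /=; rewrite addrA.
apply: DeriveDef; first by rewrite /derivable eq; exact: (@ex_derive _ _ _ _ _ _ _ D).
by rewrite /derive eq; exact: (@derive_val _ _ _ _ _ _ _ D).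
Qed.

Lemma is_derive_scaled_expR (C M a t : R) :
  is_derive t 1 (fun s => C * expR (M * (s - a))) (M * (C * expR (M * (t - a)))).
Proof. by apply: is_derive_eq; rewrite subr0 /GRing.scale /=; ring. Qed.

End derivative_estimates.

Section gronwall.
Variables (R : realType) (V : normedModType R).
Implicit Types (d : R -> V) (B : R -> R).

Lemma expR_half_le2 : expR (2^-1 : R) <= 2.
Proof.
rewrite -[X in _ <= X]invrK -[expR _]invrK -expRN lef_pV2 ?posrE ?expR_gt0 ?invr_gt0 //.
by apply: le_trans (expR_ge1Dx _); lra.
Qed.

Lemma is_derive_crossing d B (t : R) (dd : V) (dB : R) :
  is_derive t 1 d dd -> is_derive t 1 B dB -> `|dd| < dB -> B t <= `|d t| ->
  forall e, 0 < e -> exists2 s, t - e < s < t & B s < `|d s|.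
Proof.
move=> Dd DB ddB Bd e e0.
have g0 : 0 < (dB - `|dd|) / 3 by apply: divr_gt0; rewrite ?subr_gt0.
have [r1 r10 Hd] := is_derive_approx Dd g0.
have [r2 r20 HB] := @is_derive_approx _ R^o _ _ _ DB _ g0.
pose k := Order.min (Order.min r1 r2) e / 2.
have k0 : 0 < k by rewrite divr_gt0 // !lt_min r10 r20 e0.
have : k < Order.min (Order.min r1 r2) e by rewrite /k; move: k0; rewrite /k; lra.
rewrite !lt_min => /andP[/andP[kr1 kr2] ke].
have nk0 : - k != 0 by rewrite oppr_eq0 gt_eqF.
have := Hd _ nk0; have := HB _ nk0; rewrite normrN gtr0_norm // [- k + t]addrC.
move=> /(_ kr2) /ler_normlP[_ hB] /(_ kr1) hd.
exists (t - k); first lra.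
have dt_le : `|d t| <= `|d (t - k)| + `|d (t - k) - d t - - k *: dd| + k * `|dd|.
  have E : d t = d (t - k) - (d (t - k) - d t - - k *: dd) + k *: dd.
    by rewrite scaleNr opprK opprD opprB addrA subrK addrC subrK.
  rewrite {1}E; apply: (le_trans (ler_normD _ _)); rewrite normrZ gtr0_norm // lerD2r.
  exact: ler_normB.
have gk0 : 0 < (dB - `|dd|) / 3 * k by exact: mulr_gt0.
have gkE : (dB - `|dd|) / 3 * k * 3 = k * dB - k * `|dd| by field.
have {}hB : B (t - k) - B t - - k * dB <= (dB - `|dd|) / 3 * k := hB.
lra.
Qed.

Lemma gronwall d (dd : R -> V) (a b M M' C eps rho : R) :
  (forall t, a <= t <= b -> is_derive t 1 d (dd t)) ->
  (forall t, a <= t <= b -> `|d t| <= rho -> `|dd t| <= M * `|d t| + eps) ->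
  0 <= M -> 0 <= eps -> eps < (M' - M) * C -> `|d a| < C ->
  C * expR (M' * (b - a)) <= rho ->
  forall t, a <= t <= b -> `|d t| < C * expR (M' * (t - a)).
Proof.
move=> Dd dd_le M0 eps0 epsC da_lt Brho t /andP[a_t tb].
have C0 : 0 < C by exact: le_lt_trans da_lt.
have MM' : M < M' by rewrite -subr_gt0 -(pmulr_lgt0 _ C0); lra.
pose B s := C * expR (M' * (s - a)).
have DB (s : R) : is_derive s (1 : R) B (M' * B s) by exact: is_derive_scaled_expR.
have B_le s s' : s <= s' -> B s <= B s'.
  by move=> ss'; rewrite ler_pM2l // ler_expR ler_wpM2l //; lra.
have C_le s : a <= s -> C <= B s by move=> /B_le; rewrite /B subrr mulr0 expR0 mulr1.
have gap_cont s : a <= s <= b -> {for s, continuous (fun s => B s - `|d s|)}.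
  move=> hs; apply: continuousB; first exact: is_derive_continuous (DB s).
  exact: continuous_comp (is_derive_continuous (Dd s hs)) (@norm_continuous _ V _).
apply: (@real_induction _ a b (fun s => `|d s| < B s)); rewrite ?a_t ?tb //; first lra.
move=> {a_t tb}t ht IH; have [a_t tb] := andP ht.
suff dB_lt : `|d t| < B t.
  have [|e e0 He] := continuous_gt0_right (gap_cont t ht); first by rewrite subr_gt0.
  by split=> //; exists e => // s /He; rewrite subr_gt0.
have [->|ta] := eqVneq t a; first by rewrite /B subrr mulr0 expR0 mulr1.
have {}a_t : a < t by rewrite lt_neqAle eq_sym ta.
have dB_le : `|d t| <= B t.
  rewrite -subr_ge0; apply: continuous_ge0_left (gap_cont t ht) a_t _ => s /IH.
  by rewrite subr_gt0.
rewrite ltNge; apply/negP => Bd.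
have dd_lt : `|dd t| < M' * B t.
  apply: (le_lt_trans (dd_le _ ht _)).
    by apply: (le_trans dB_le); apply: le_trans Brho; exact: B_le.
  by have := C_le t (ltW a_t); have := ler_wpM2l M0 dB_le; nra.
have ta0 : 0 < t - a by rewrite subr_gt0.
have [s /andP[ts st] Bds] := is_derive_crossing (Dd t ht) (DB t) dd_lt Bd ta0.
by have := IH s ltac:(apply/andP; split; lra); lra.
Qed.

(* Any constant would do; 4 bounds 2 * expR (1/2), from Gronwall with rate (2 (b - a))^-1. *)
Lemma mean_value_le (g dg : R -> V) (a b K : R) : a <= b ->
  (forall t, a <= t <= b -> is_derive t 1 g (dg t)) ->
  (forall t, a <= t <= b -> `|dg t| <= K) ->
  `|g b - g a| <= 4 * K * (b - a).
Proof.
move=> ab Dg dg_le.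
have K0 : 0 <= K by apply: le_trans (dg_le a _); rewrite // lexx ab.
have [->|ba] := eqVneq b a; first by rewrite !subrr normr0 mulr0.
have ba0 : 0 < b - a by rewrite subr_gt0 lt_neqAle eq_sym ba.
apply/ler_addgt0Pr => beta beta0.
pose C := 2 * K * (b - a) + beta / 2.
pose M' := (2 * (b - a))^-1.
have C0 : 0 < C by rewrite /C; have := mulr_ge0 K0 (ltW ba0); lra.
have M'ba : M' * (b - a) = 2^-1 by rewrite /M' invfM -mulrA mulVf ?gt_eqF // mulr1.
have epsC : K < (M' - 0) * C.
  have -> : (M' - 0) * C = K + M' * (beta / 2) by rewrite /M' /C; field; rewrite gt_eqF.
  by rewrite ltrDl mulr_gt0 // ?invr_gt0 ?mulr_gt0 // divr_gt0.
have Dd t : a <= t <= b -> is_derive t 1 (fun s => g s - g a) (dg t - 0).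
  by move=> ht; apply: is_deriveB; exact: Dg.
have dd_le t : a <= t <= b -> `|g t - g a| <= C * expR (M' * (b - a)) ->
    `|dg t - 0| <= 0 * `|g t - g a| + K.
  by move=> ht _; rewrite subr0 mul0r add0r; exact: dg_le.
have := @gronwall _ _ a b 0 M' C K _ Dd dd_le (lexx 0) K0 epsC.
rewrite subrr normr0 => /(_ C0 (lexx _) b); rewrite ab lexx M'ba => /(_ isT) Hb.
apply/ltW/(lt_le_trans Hb).
have := ler_wpM2l (ltW C0) expR_half_le2; rewrite /C; lra.
Qed.

End gronwall.

Section row_norms.
Variables (R : realType) (n : nat).
Implicit Types (v w : 'rV[R]_n) (c : R).

Lemma normr_entry_le v i : `|v ord0 i| <= `|v|.
Proof.
rewrite [leRHS]/Num.norm /= mx_normrE.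
exact: (le_bigmax (0:R) (fun ij : 'I_1 * 'I_n => `|v ij.1 ij.2|) (ord0, i)).
Qed.

Lemma normr_le_entries v c : 0 <= c -> (forall i, `|v ord0 i| <= c) -> `|v| <= c.
Proof.
move=> c0 vc; rewrite [leLHS]/Num.norm /= mx_normrE.
by apply/bigmax_leP; split => // -[i j] _ /=; rewrite (ord1 i).
Qed.

Lemma sum_sqr_ge0 v : 0 <= \sum_(i < n) v ord0 i ^+ 2.
Proof. by apply: sumr_ge0 => i _; exact: sqr_ge0. Qed.

Lemma enorm_lt v c : 0 < c -> (enorm v < c) = (\sum_(i < n) v ord0 i ^+ 2 < c ^+ 2).
Proof.
move=> c0; have {1}-> : c = Num.sqrt (c ^+ 2) by rewrite sqrtr_sqr gtr0_norm.
by rewrite /enorm ltr_sqrt // exprn_gt0.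
Qed.

Lemma normr_le_enorm v : `|v| <= enorm v.
Proof.
apply: normr_le_entries => [|i]; first exact: sqrtr_ge0.
rewrite /enorm -(sqrtr_sqr (v ord0 i)) ler_sqrt; last exact: sum_sqr_ge0.
by rewrite (bigD1 i) //= lerDl; apply: sumr_ge0 => j _; exact: sqr_ge0.
Qed.

Lemma enorm_le_natmul v : enorm v <= n%:R * `|v|.
Proof.
rewrite /enorm -(@ger0_norm _ (n%:R * `|v|)) ?mulr_ge0 //.
rewrite -sqrtr_sqr ler_sqrt ?sqr_ge0 //.
apply: (@le_trans _ _ (\sum_(i < n) `|v| ^+ 2)).
  apply: ler_sum => i _; rewrite -real_normK ?num_real //.
  by rewrite lerXn2r ?nnegrE // normr_entry_le.
rewrite sumr_const card_ord -mulr_natl exprMn.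
have nn : n%:R <= (n%:R : R) ^+ 2.
  by case: n => [|m]; rewrite expr2 ?mul0r // ler_peMl // ler1n.
by rewrite -mulr_natl; have := sqr_ge0 `|v|; nra.
Qed.

Lemma enorm_add_lt v w c : enorm v < c -> enorm w < c -> enorm (v + w) < 2 * c.
Proof.
move=> vc wc; have c0 : 0 < c by apply: le_lt_trans vc; exact: sqrtr_ge0.
move: vc wc; rewrite !enorm_lt ?mulr_gt0 // => vc wc.
apply: (@le_lt_trans _ _ (\sum_(i < n) (2 * v ord0 i ^+ 2 + 2 * w ord0 i ^+ 2))).
  by apply: ler_sum => i _; rewrite !mxE; have := sqr_ge0 (v ord0 i - w ord0 i); nra.
by rewrite big_split /= -!mulr_sumr; nra.
Qed.

End row_norms.

Section segment_estimate.
Variables (R : realType) (V W : normedModType R).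

Lemma is_derive_along (f : V -> W) (p E : V) (th : R) :
  derivable f (p + th *: E) E ->
  is_derive th 1 (fun s => f (p + s *: E)) ('D_E f (p + th *: E)).
Proof.
move=> D.
have eq : (fun h : R =>
      h^-1 *: (((fun s => f (p + s *: E)) \o shift th) (h *: (1:R)) - f (p + th *: E)))
  = (fun h : R => h^-1 *: ((f \o shift (p + th *: E)) (h *: E) - f (p + th *: E))).

  apply/funext => h /=; congr (_ *: (f _ - _)).
  by rewrite [h *: 1]mulr1 scalerDl addrCA addrA.
by apply: DeriveDef; [rewrite /derivable eq | rewrite /derive eq].
Qed.

Lemma segment_lipschitz (f : V -> W) (S : set V) (E : V) (K : R) :
  (forall p q th, S p -> S q -> 0 <= th <= 1 -> S (p + th *: (q - p))) ->
  (forall p, S p -> derivable f p E /\ `|'D_E f p| <= K) ->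
  forall p c, S p -> S (p + c *: E) -> `|f (p + c *: E) - f p| <= 4 * K * `|c|.
Proof.
move=> S_convex DfK p c; wlog c0 : p c / 0 <= c => [hwlog|] Sp Sq.
  have [|c_lt0] := leP 0 c; first by move=> c0; exact: hwlog.
  have := hwlog (p + c *: E) (- c); rewrite oppr_ge0 normrN distrC.
  by rewrite scaleNr addrK; apply; rewrite ?ltW.
have [->|c_neq0] := eqVneq c 0; first by rewrite scale0r addr0 subrr normr0 normr0 mulr0.
have c_gt0 : 0 < c by rewrite lt_neqAle eq_sym c_neq0.
have S_seg th : 0 <= th <= c -> S (p + th *: E).
  move=> /andP[th0 thc]; have -> : p + th *: E = p + (th / c) *: (p + c *: E - p).
    by rewrite [p + _ - p]addrC addKr scalerA mulfVK.
  by apply: S_convex => //; rewrite divr_ge0 ?ler_pdivrMr ?mul1r // ltW.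
have := @mean_value_le _ _ (fun s => f (p + s *: E)) (fun s => 'D_E f (p + s *: E)) 0 c K c0.
rewrite scale0r addr0 subr0 ger0_norm //; apply=> th /S_seg /DfK[] //.
by move=> D _; exact: is_derive_along.
Qed.

End segment_estimate.

Lemma continuous_bounded_on_compact (R : realType) (X : topologicalType) (W : normedModType R)
  (g : X -> W) (S : set X) : continuous g -> compact S ->
  exists K, 0 <= K /\ forall p, S p -> `|g p| <= K.
Proof.
move=> gc cS.
have /compact_bounded[M [Mreal HM]] : compact (g @` S).
  by apply: continuous_compact => //; exact: continuous_subspaceT.
exists (`|M| + 1); split=> [|p Sp]; first exact: addr_ge0.
apply: (HM (`|M| + 1)); last by exists p.
by rewrite (le_lt_trans (real_ler_norm Mreal)) // ltrDl.
Qed.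

Section lipschitz_on_boxes.
Variables (R : realType) (n : nat).

Definition box (Rb l1 l2 : R) : set ('rV[R]_n * R) :=
  [set p | `|p.1| <= Rb /\ l1 <= p.2 <= l2].

Lemma box_compact (Rb l1 l2 : R) : 0 <= Rb -> compact (box Rb l1 l2).
Proof.
move=> Rb0.
have -> : box Rb l1 l2 =
    [set v : 'rV[R]_n | forall i, `[- Rb, Rb]%classic (v ord0 i)] `*` `[l1, l2]%classic.
  apply/seteqP; split=> [[x l] /= [x_le l_in]|[x l] /= [x_in l_in]].
    split=> [i|]; last by rewrite /= in_itv.
    by rewrite /= in_itv /= -ler_norml (le_trans (normr_entry_le _ _)).
  split; last by move: l_in; rewrite /= in_itv.
  by apply: normr_le_entries => // i; have := x_in i; rewrite /= in_itv /= -ler_norml.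
apply: compact_setX; last exact: segment_compact.
by apply: (@rV_compact _ _ (fun=> `[- Rb, Rb]%classic)) => _; exact: segment_compact.
Qed.

Lemma box_convex (Rb l1 l2 : R) p q th : box Rb l1 l2 p -> box Rb l1 l2 q -> 0 <= th <= 1 ->
  box Rb l1 l2 (p + th *: (q - p)).
Proof.
move=> [p1 /andP[p21 p22]] [q1 /andP[q21 q22]] /andP[th0 th1]; split => /=.
  have -> : p.1 + th *: (q.1 - p.1) = (1 - th) *: p.1 + th *: q.1.
    by rewrite scalerBr scalerBl scale1r addrCA addrC.
  apply: (le_trans (ler_normD _ _)); rewrite !normrZ !ger0_norm ?subr_ge0 //.
  have th1' : 0 <= 1 - th by rewrite subr_ge0.
  by have := ler_wpM2l th0 q1; have := ler_wpM2l th1' p1; lra.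
rewrite /GRing.scale /=; apply/andP; split; nra.
Qed.

Variable f : 'rV[R]_n * R -> 'rV[R]_n.
Hypothesis Cf : C1 f.

Lemma C1_derive_bounded_on_box (v : 'rV[R]_n * R) (Rb l1 l2 : R) : 0 <= Rb ->
  exists K, 0 <= K /\
    forall p, box Rb l1 l2 p -> derivable f p v /\ `|'D_v f p| <= K.
Proof.
move=> Rb0; have [K [K0 HK]] := continuous_bounded_on_compact (Cf v).2 (@box_compact Rb l1 l2 Rb0).
by exists K; split=> // p /HK; split; first exact: (Cf v).1.
Qed.

Lemma lipschitz_in_state (Rb l1 l2 K : R) :
  (forall (k : 'I_n) p, box Rb l1 l2 p ->
     derivable f p (delta_mx ord0 k, 0) /\ `|'D_(delta_mx ord0 k, 0) f p| <= K) ->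
  forall x y l, box Rb l1 l2 (x, l) -> box Rb l1 l2 (y, l) ->
    `|f (y, l) - f (x, l)| <= 4 * K * n%:R * `|y - x|.
Proof.
move=> DfK x y l [/= x_le l_in] [/= y_le _].
pose z k : 'rV[R]_n := \row_j (if (j < k)%N then y ord0 j else x ord0 j).
have z_box k : box Rb l1 l2 (z k, l).
  split=> //=; apply: normr_le_entries => [|j]; first exact: le_trans x_le.
  by rewrite mxE; case: ifP => _; apply: le_trans (normr_entry_le _ _) _.
suff : forall k, (k <= n)%N -> `|f (z k, l) - f (x, l)| <= 4 * K * k%:R * `|y - x|.
  by move=> /(_ n (leqnn n)); have -> // : z n = y by apply/rowP => j; rewrite mxE ltn_ord.
elim=> [|k IH] kn.
  have -> : z 0%N = x by apply/rowP => j; rewrite mxE.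
  by rewrite subrr normr0 mulr0 mul0r.
pose kk : 'I_n := Ordinal kn; pose c := y ord0 kk - x ord0 kk.
have K0 : 0 <= K by have [_] := DfK kk _ (z_box k); exact: le_trans.
have zS : (z k.+1, l) = (z k, l) + c *: (delta_mx ord0 kk, 0).
  change ((z k.+1, l) = (z k + c *: delta_mx ord0 kk, l + c *: (0 : R))).
  rewrite scaler0 addr0; congr (_, _); apply/rowP => j; rewrite !mxE /=.
  have [->|jk] := eqVneq j kk; first by rewrite ltnSn ltnn mulr1 /c addrC subrK.
  rewrite mulr0 addr0 ltnS leq_eqVlt; suff /negbTE -> : nat_of_ord j != k by [].
  by apply: contra jk => /eqP jk; apply/eqP/val_inj.
have step : `|f (z k.+1, l) - f (z k, l)| <= 4 * K * `|y - x|.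
  have box_zS : box Rb l1 l2 ((z k, l) + c *: (delta_mx ord0 kk, 0)) by rewrite -zS.
  rewrite zS; apply: (le_trans (segment_lipschitz _ (DfK kk) (z_box k) box_zS)).
    by move=> p q th; exact: box_convex.
  rewrite ler_wpM2l ?mulr_ge0 // /c; have := normr_entry_le (y - x) kk; rewrite !mxE; exact.
have -> : f (z k.+1, l) - f (x, l) = (f (z k.+1, l) - f (z k, l)) + (f (z k, l) - f (x, l)).
  by rewrite addrA subrK.
have -> : (k.+1%:R : R) = k%:R + 1 by rewrite -natr1.
apply: (le_trans (ler_normD _ _)); have := IH (ltnW kn); lra.
Qed.

Lemma C1_lipschitz_on_box (Rb l1 l2 : R) : 0 <= Rb ->
  exists M, 0 <= M /\ forall p q, box Rb l1 l2 p -> box Rb l1 l2 q ->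
    `|f p - f q| <= M * (`|p.1 - q.1| + `|p.2 - q.2|).
Proof.
move=> Rb0.
have [Kx HKx] := choice (fun k : 'I_n => C1_derive_bounded_on_box (delta_mx ord0 k, 0) l1 l2 Rb0).
have [Kl [Kl0 HKl]] := C1_derive_bounded_on_box (0, 1) l1 l2 Rb0.
pose K := \sum_k Kx k + Kl.
have Kx_le k : Kx k <= K.
  rewrite /K (bigD1 k) //= -addrA lerDl addr_ge0 // sumr_ge0 // => j _.
  by case: (HKx j).
have K0 : 0 <= K by rewrite addr_ge0 // sumr_ge0 // => j _; case: (HKx j).
exists (4 * K * (n%:R + 1)); split=> [|[x l] [y l'] [/= x_le l_in] [/= y_le l'_in]].
  by rewrite !mulr_ge0 // addr_ge0.
have DfK k p : box Rb l1 l2 p ->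
    derivable f p (delta_mx ord0 k, 0) /\ `|'D_(delta_mx ord0 k, 0) f p| <= K.
  by move=> /(HKx k).2[D DK]; split=> //; exact: le_trans (Kx_le k).
have state := lipschitz_in_state DfK (conj y_le l_in) (conj x_le l_in).
have param : `|f (y, l) - f (y, l')| <= 4 * Kl * `|l - l'|.
  have E : (y, l) = (y, l') + (l - l') *: (0, 1).
    change ((y, l) = (y + (l - l') *: 0, l' + (l - l') * 1)).
    by rewrite scaler0 addr0 mulr1 addrC subrK.
  have box_yl' : box Rb l1 l2 (y, l') by [].
  have box_yl : box Rb l1 l2 ((y, l') + (l - l') *: (0, 1)) by rewrite -E.
  rewrite [in f (y, l)]E.
  have := segment_lipschitz (fun p q th => @box_convex Rb l1 l2 p q th) HKl box_yl' box_yl.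
  by apply.
have -> : f (x, l) - f (y, l') = (f (x, l) - f (y, l)) + (f (y, l) - f (y, l')).
  by rewrite addrA subrK.
apply: (le_trans (ler_normD _ _)).
have Kl_le : Kl <= K by rewrite lerDr sumr_ge0 // => j _; case: (HKx j).
have := ler_wpM2r (normr_ge0 (l - l')) (ler_wpM2l (ler0n R 4) Kl_le).
have := mulr_ge0 (mulr_ge0 (mulr_ge0 (ler0n R 4) K0) (ler0n R n)) (normr_ge0 (l - l')).
have := mulr_ge0 (mulr_ge0 (ler0n R 4) K0) (normr_ge0 (x - y)).
lra.
Qed.

End lipschitz_on_boxes.

Lemma derivable_bounded_on_segment (R : realType) (V : normedModType R) (w : R -> V) (a b : R) :
  (forall t, a <= t <= b -> derivable w t 1) ->
  exists Rw, 0 <= Rw /\ forall t, a <= t <= b -> `|w t| <= Rw.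
Proof.
move=> D.
have wc : {within [set` `[a, b]], continuous w}.
  by apply: derivable_within_continuous => t; rewrite in_itv /=; exact: D.
have /compact_bounded[M [Mreal HM]] : compact (w @` [set` `[a, b]]).
  by apply: continuous_compact => //; exact: segment_compact.
exists (`|M| + 1); split=> [|t ht]; first exact: addr_ge0.
apply: (HM (`|M| + 1)); first by rewrite (le_lt_trans (real_ler_norm Mreal)) // ltrDl.
by exists t => //; rewrite /= in_itv.
Qed.

Section solutions.
Variables (R : realType) (n : nat) (f : 'rV[R]_n * R -> 'rV[R]_n).
Hypothesis Cf : C1 f.

Definition is_solution (lam : R -> R) (u : R -> 'rV[R]_n) (a b : R) : Prop :=
  forall t, a <= t <= b -> is_derive t 1 u (f (u t, lam t)).

Lemma solutions_close (lo hi Rb T mu : R) : 0 <= Rb -> 0 <= T -> 0 < mu ->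
  exists2 delta, 0 < delta & forall a u w l1 l2,
    is_solution l1 u a (a + T) -> is_solution l2 w a (a + T) ->
    (forall t, a <= t <= a + T ->
       [/\ lo <= l1 t <= hi, lo <= l2 t <= hi, `|l1 t - l2 t| < delta & `|w t| <= Rb]) ->
    `|u a - w a| < delta -> `|u (a + T) - w (a + T)| < mu.
Proof.
move=> Rb0 T0 mu0.
have [M [M0 HM]] := C1_lipschitz_on_box Cf lo hi (addr_ge0 Rb0 ler01).
pose mu' := Order.min mu 1.
have mu'0 : 0 < mu' by rewrite lt_min mu0 ltr01.
have [mu'mu mu'1] : mu' <= mu /\ mu' <= 1 by rewrite !ge_min !lexx ?orbT.
pose C := mu' * expR (- ((M + 1) * T)).
have C0 : 0 < C by rewrite mulr_gt0 ?expR_gt0.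
have CE a : C * expR ((M + 1) * (a + T - a)) = mu'.
  by rewrite addrAC subrr add0r -mulrA -expRD addNr expR0 mulr1.
have M10 : 0 < M + 1 by lra.
exists (C / (M + 1)) => [|a u w l1 l2 Du Dw bounds uw]; first exact: divr_gt0.
have MdC : M * (C / (M + 1)) < (M + 1 - M) * C.
  by rewrite addrAC subrr add0r mul1r mulrA ltr_pdivrMr // mulrC ltr_pM2l //; lra.
have dC : C / (M + 1) <= C by rewrite ler_pdivrMr // ler_peMr //; lra.
have Dd t : a <= t <= a + T ->
    is_derive t 1 (fun s => u s - w s) (f (u t, l1 t) - f (w t, l2 t)).
  by move=> ht; apply: is_deriveB; [exact: Du | exact: Dw].
have dd_le t : a <= t <= a + T -> `|u t - w t| <= 1 ->
    `|f (u t, l1 t) - f (w t, l2 t)| <= M * `|u t - w t| + M * (C / (M + 1)).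
  move=> /bounds[l1_in l2_in l12 w_le] uw1.
  have u_le : `|u t| <= Rb + 1.
    by have := ler_normD (u t - w t) (w t); rewrite subrK; lra.
  apply: (le_trans (HM (u t, l1 t) (w t, l2 t) _ _)) => //=.
    by split=> //; lra.
  by rewrite mulrDr lerD2l ler_wpM2l // ltW.
have := gronwall Dd dd_le M0 (mulr_ge0 M0 (ltW (divr_gt0 C0 M10))) MdC (lt_le_trans uw dC).
rewrite CE => /(_ mu'1 (a + T)); rewrite CE => /(_ _)/lt_le_trans; apply => //.
by apply/andP; split; lra.
Qed.

Lemma solution_unique (lo hi : R) (lam : R -> R) (u w : R -> 'rV[R]_n) (a b : R) :
  a <= b -> is_solution lam u a b -> is_solution lam w a b ->
  (forall t, a <= t <= b -> lo <= lam t <= hi) -> u a = w a -> u b = w b.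
Proof.
move=> ab Du Dw lam_in uw.
have [Rw [Rw0 w_le]] :=
  derivable_bounded_on_segment (fun t ht => @ex_derive _ _ _ _ _ _ _ (Dw t ht)).
apply/eqP; rewrite -subr_eq0 -normr_eq0 eq_le normr_ge0 andbT.
apply/ler_addgt0Pr => mu mu0; rewrite add0r; apply: ltW.
have ba0 : 0 <= b - a by rewrite subr_ge0.
have [d d0 close] := solutions_close lo hi Rw0 ba0 mu0.
have E : a + (b - a) = b by rewrite addrC subrK.
have := close a u w lam lam; rewrite E; apply=> // [t ht|]; last by rewrite uw subrr normr0.
by rewrite subrr normr0 d0 w_le // lam_in.
Qed.

End solutions.

Section flows.
Variables (R : realType) (n : nat) (f : 'rV[R]_n * R -> 'rV[R]_n) (lm lp : R) (L : R -> R)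
  (r : R) (Phi : R -> R -> 'rV[R]_n -> 'rV[R]_n) (phi : R -> 'rV[R]_n -> 'rV[R]_n).
Hypotheses (Cf : C1 f) (PS : parameter_shift lm lp L)
  (SC : solution_cocycle f L r Phi) (AF : autonomous_flow f lm phi).

Lemma parameter_shift_range t : lm <= L t <= lp.
Proof. by case: PS => _ [/(_ t) /andP[? ?] _]; rewrite !ltW. Qed.

Lemma parameter_shift_le : lm <= lp.
Proof. by have /andP[] := parameter_shift_range 0; exact: le_trans. Qed.

Lemma cocycle_is_solution s x a b : is_solution f (fun t => L (r * t)) (fun t => Phi t s x) a b.
Proof. by move=> t _; exact: (SC s x).2. Qed.

Lemma flow_is_solution x a b : is_solution f (fun=> lm) (phi^~ x) a b.
Proof. by move=> t _; exact: (AF x).2. Qed.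

Lemma shifted_flow_is_solution s x a b : is_solution f (fun=> lm) (fun t => phi (t - s) x) a b.
Proof. by move=> t _; exact: (@is_derive_comp_shift _ _ (phi^~ x) s t _ ((AF x).2 (t - s))). Qed.

Lemma cocycle_comp s s' t x : s <= s' -> s' <= t -> Phi t s x = Phi t s' (Phi s' s x).
Proof.
move=> ss' s't; apply: (solution_unique Cf (lo := lm) (hi := lp) (lam := fun th => L (r * th))
  (u := fun th => Phi th s x) (w := fun th => Phi th s' (Phi s' s x)) s't).
- exact: cocycle_is_solution.
- exact: cocycle_is_solution.
- by move=> th _; exact: parameter_shift_range.
- by rewrite (SC s' _).1.
Qed.

Lemma flow_comp T t y : 0 <= T -> T <= t -> phi t y = phi (t - T) (phi T y).
Proof.
move=> T0 Tt.
apply: (solution_unique Cf (lo := lm) (hi := lp)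
  (lam := fun=> lm) (u := phi^~ y) (w := fun th => phi (th - T) (phi T y)) Tt).
- exact: flow_is_solution.
- exact: shifted_flow_is_solution.
- by move=> th _; rewrite lexx parameter_shift_le.
- by rewrite subrr (AF _).1.
Qed.

Lemma flow_continuous (T Rb : R) x : 0 <= T -> 0 <= Rb ->
  (forall th, 0 <= th <= T -> `|phi th x| <= Rb) ->
  forall mu, 0 < mu -> exists2 rho, 0 < rho &
    forall x', `|x' - x| < rho -> `|phi T x' - phi T x| < mu.
Proof.
move=> T0 Rb0 x_le mu mu0.
have [d d0 close] := solutions_close Cf lm lp Rb0 T0 mu0.
exists d => // x' x'x; have := close 0 (phi^~ x') (phi^~ x) (fun=> lm) (fun=> lm).
rewrite add0r !(AF _).1; apply=> // [||t ht]; try exact: flow_is_solution.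
by rewrite subrr normr0 d0 x_le // lexx parameter_shift_le.
Qed.

Hypothesis r0 : 0 < r.

Lemma cocycle_near_flow (T Rb mu : R) : 0 <= T -> 0 <= Rb -> 0 < mu ->
  exists s0, forall s x, s <= s0 -> (forall th, 0 <= th <= T -> `|phi th x| <= Rb) ->
    `|Phi (s + T) s x - phi T x| < mu.
Proof.
move=> T0 Rb0 mu0.
have [d d0 close] := solutions_close Cf lm lp Rb0 T0 mu0.
have [_ [_ [/cvgr_dist_lt /(_ d d0) [X [_ LX]] _]]] := PS.
exists (X / r - T - 1) => s x ss0 x_le.
have := close s (fun t => Phi t s x) (fun t => phi (t - s) x) (fun t => L (r * t)) (fun=> lm).
have E : s + T - s = T by rewrite addrAC subrr add0r.
rewrite E (subrr s) (SC s x).1 (AF x).1 subrr normr0; apply=> //.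
- exact: cocycle_is_solution.
- exact: shifted_flow_is_solution.
move=> t /andP[st tsT]; split.
- exact: parameter_shift_range.
- by rewrite lexx parameter_shift_le.
- rewrite distrC; apply: LX; have : t < X / r by lra.
  by rewrite ltr_pdivlMr // mulrC.
- by apply: x_le; apply/andP; split; lra.
Qed.

End flows.

Section neighbourhoods.
Variables (R : realType) (n : nat).
Implicit Types (A : set 'rV[R]_n) (x z : 'rV[R]_n) (e : R).

Lemma nbhd_set_le e (e' : R) A : e <= e' -> nbhd_set e A `<=` nbhd_set e' A.
Proof. by move=> ee' x [a Aa xa]; exists a => //; exact: lt_le_trans ee'. Qed.

Lemma nbhd_set_perturb e A x z : nbhd_set e A x -> `|z - x| < e / (n%:R + 1) ->
  nbhd_set (2 * e) A z.
Proof.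
move=> [a Aa xa] zx; exists a => //.
have e0 : 0 < e by apply: le_lt_trans xa; exact: sqrtr_ge0.
have -> : z - a = (z - x) + (x - a) by rewrite addrA subrK.
apply: enorm_add_lt => //; apply: (le_lt_trans (enorm_le_natmul _)).
have n1 : 0 < n%:R + 1 :> R by rewrite ltr_wpDl.
apply: (le_lt_trans (ler_wpM2l (ler0n _ _) (ltW zx))).
by rewrite mulrA ltr_pdivrMr // mulrDr mulr1 mulrC ltrDl.
Qed.

Lemma nbhd_set_normr_le e A (Ra : R) x : (forall a, A a -> `|a| <= Ra) ->
  nbhd_set e A x -> `|x| <= Ra + e.
Proof.
move=> A_le [a Aa xa]; have := ler_normD (x - a) a; rewrite subrK.
by have := A_le a Aa; have := normr_le_enorm (x - a); lra.
Qed.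

Lemma closure_nbhd_set_sub e A : 0 < e -> closure (nbhd_set e A) `<=` nbhd_set (2 * e) A.
Proof.
move=> e0 z /(_ _ (nbhsx_ballx z (e / (n%:R + 1)) _)) [|x [Nx zx]].
  by rewrite divr_gt0 // ltr_wpDl.
by apply: nbhd_set_perturb Nx _; move: zx; rewrite -ball_normE /ball_ /=.
Qed.

Lemma compact_closure_nbhd_set e A : compact A -> 0 < e -> compact (closure (nbhd_set e A)).
Proof.
move=> cA e0; apply: bounded_closed_compact; last exact: closed_closure.
have [Ra [Ra0 A_le]] := continuous_bounded_on_compact (g := id) (fun _ => cvg_id) cA.
exists (Ra + 2 * e); split=> [|M M_gt z /(closure_nbhd_set_sub e0) Nz]; first exact: num_real.
exact/ltW/(le_lt_trans (nbhd_set_normr_le A_le Nz)).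
Qed.

End neighbourhoods.

Section pullback_sets.
Variables (R : realType) (n : nat) (Phi : R -> R -> 'rV[R]_n -> 'rV[R]_n) (A : set 'rV[R]_n).

Lemma pullback_set_le (e e' t : R) : e <= e' ->
  pullback_set Phi A e t `<=` pullback_set Phi A e' t.
Proof.
move=> ee' z Az tau tau0; apply: closureS (Az tau tau0).
by move=> w [s s_le [x Nx <-]]; exists s => //; exists x => //; exact: nbhd_set_le Nx.
Qed.

(* By the cocycle property, Phi t s (N_e') with s very negative lies in
   Phi t (s + T) (N_e), and s + T is still very negative. *)
Lemma pullback_set_absorb (e e' T s0 : R) :
  (forall s s' t x, s <= s' -> s' <= t -> Phi t s x = Phi t s' (Phi s' s x)) -> 0 <= T ->
  (forall s x, s <= s0 -> nbhd_set e' A x -> nbhd_set e A (Phi (s + T) s x)) ->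
  forall t, pullback_set Phi A e' t `<=` pullback_set Phi A e t.
Proof.
move=> cocycle T0 absorb t z Az tau /= tau0.
pose m := Order.max (tau + T) (Order.max (- s0) (T - t)).
have [m1 m2 m3] : [/\ tau + T <= m, - s0 <= m & T - t <= m] by rewrite /m !le_max !lexx ?orbT.
have m1_gt0 : 0 < m + 1 by move: tau0 => /= tau0; lra.
apply: closureS (Az (m + 1) m1_gt0).
move=> w [s /= s_le [x Nx <-]]; exists (s + T); first by rewrite /=; lra.
exists (Phi (s + T) s x); first by apply: absorb Nx; lra.
by rewrite -cocycle //; lra.
Qed.

End pullback_sets.

Section attraction.
Variables (R : realType) (n : nat) (f : 'rV[R]_n * R -> 'rV[R]_n) (lm lp : R) (L : R -> R)
  (r : R) (Phi : R -> R -> 'rV[R]_n -> 'rV[R]_n) (phi : R -> 'rV[R]_n -> 'rV[R]_n)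
  (Am : set 'rV[R]_n).
Hypotheses (Cf : C1 f) (PS : parameter_shift lm lp L)
  (SC : solution_cocycle f L r Phi) (AF : autonomous_flow f lm phi).

Lemma flow_eventually_near_locally (e de Rb : R) x : 0 < de -> 0 <= Rb ->
  (forall t y, 0 < t -> nbhd_set de Am y -> nbhd_set e Am (phi t y)) ->
  (forall th, 0 <= th -> `|phi th x| <= Rb) ->
  (\forall t \near +oo, nbhd_set (de / 2) Am (phi t x)) ->
  \forall x' \near x & t \near +oo, nbhd_set e Am (phi t x').
Proof.
move=> de0 Rb0 stab x_le [M [_ HM]].
pose Tx := Order.max M 0 + 1.
have [MTx Tx0] : M < Tx /\ 0 < Tx.
  have : M <= Order.max M 0 /\ 0 <= Order.max M 0 by rewrite !le_max !lexx ?orbT.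
  by rewrite /Tx; lra.
have mu0 : 0 < de / 2 / (n%:R + 1) by rewrite !divr_gt0 // ltr_wpDl.
have [rho rho0 Hrho] := flow_continuous Cf PS AF (ltW Tx0) Rb0
  (fun th hth => x_le th (proj1 (andP hth))) mu0.
exists (ball x rho, [set t | Tx < t]) => [|[x' t] [/= x'x Txt]].
  by split; [exact: nbhsx_ballx | exists Tx; split=> //; exact: num_real].
have Nx' : nbhd_set de Am (phi Tx x').
  have -> : de = 2 * (de / 2) by rewrite mulrC divfK ?pnatr_eq0.
  apply: nbhd_set_perturb (HM Tx MTx) _; apply: Hrho.
  by move: x'x; rewrite -ball_normE /ball_ /= distrC.
by rewrite (flow_comp Cf PS AF x' (ltW Tx0) (ltW Txt)); apply: stab Nx'; rewrite subr_gt0.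
Qed.

Lemma uniform_attraction (Y : set 'rV[R]_n) (e de Rb : R) : compact Y -> 0 < de -> 0 <= Rb ->
  (forall t y, 0 < t -> nbhd_set de Am y -> nbhd_set e Am (phi t y)) ->
  (forall x, Y x -> forall th, 0 <= th -> `|phi th x| <= Rb) ->
  (forall x, Y x -> forall eps : R, 0 < eps -> \forall t \near +oo, nbhd_set eps Am (phi t x)) ->
  \forall t \near +oo, forall x, Y x -> nbhd_set e Am (phi t x).
Proof.
move=> cY de0 Rb0 stab Y_le attr; have de2 : 0 < de / 2 by rewrite divr_gt0.
apply: ((compact_near_coveringP Y).1 cY R (nbhs +oo) (fun t x => nbhd_set e Am (phi t x)) _).
move=> x Yx; apply: flow_eventually_near_locally de0 Rb0 stab (Y_le x Yx) _.
exact: attr.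
Qed.

Hypothesis AS : asymptotically_stable phi Am.

Lemma flow_bounded_near_attractor : exists2 d, 0 < d &
  exists Rb, 0 <= Rb /\ forall x, nbhd_set d Am x -> forall th, 0 <= th -> `|phi th x| <= Rb.
Proof.
case: AS => cA _ stab _.
have [Ra [Ra0 A_le]] := continuous_bounded_on_compact (g := id) (fun _ => cvg_id) cA.
have [d1 d10 Hd1] := stab 1 ltr01.
exists (Order.min d1 1); first by rewrite lt_min d10 ltr01.
exists (Ra + 1); split=> [|x Nx th]; first exact: addr_ge0.
rewrite le_eqVlt => /orP[/eqP <-|th0].
  rewrite (AF x).1; apply: le_trans (nbhd_set_normr_le A_le Nx) _.
  by rewrite lerD2l ge_min lexx orbT.
apply: (nbhd_set_normr_le A_le); apply: Hd1 th0 _; apply: nbhd_set_le Nx.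
by rewrite ge_min lexx.
Qed.

Hypothesis r0 : 0 < r.

Lemma absorbing_time : exists2 eta0, 0 < eta0 &
  forall e e', 0 < e -> e <= e' -> e' <= eta0 -> exists T s0, 0 <= T /\
    forall s x, s <= s0 -> nbhd_set e' Am x -> nbhd_set e Am (Phi (s + T) s x).
Proof.
case: AS => cA _ stab [ea ea0 attr].
have [dB dB0 [Rb [Rb0 traj_le]]] := flow_bounded_near_attractor.
have m0 : 0 < Order.min dB ea by rewrite lt_min dB0 ea0.
have [mdB mea] : Order.min dB ea <= dB /\ Order.min dB ea <= ea by rewrite !ge_min !lexx ?orbT.
exists (Order.min dB ea / 2) => [|e e' e0 ee' e'_le]; first exact: divr_gt0.
pose Y := closure (nbhd_set e' Am).
have e'0 : 0 < e' by exact: lt_le_trans ee'.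
have YN x : Y x -> [/\ nbhd_set dB Am x & nbhd_set ea Am x].
  move=> /(closure_nbhd_set_sub e'0) Nx.
  by split; apply: nbhd_set_le Nx; lra.
have [d2 d20 stab2] := stab (e / 2) ltac:(by rewrite divr_gt0).
have := uniform_attraction (compact_closure_nbhd_set cA e'0) d20 Rb0 stab2
  (fun x Yx => traj_le x (YN x Yx).1) (fun x Yx => attr x (YN x Yx).2).
move=> [M [_ HM]]; pose T := Order.max M 0 + 1.
have [MT T0] : M < T /\ 0 <= T.
  have : M <= Order.max M 0 /\ 0 <= Order.max M 0 by rewrite !le_max !lexx ?orbT.
  by rewrite /T; lra.
have mu0 : 0 < e / 2 / (n%:R + 1) by rewrite !divr_gt0 // ltr_wpDl.
have [s0 near_flow] := cocycle_near_flow Cf PS SC AF r0 T0 Rb0 mu0.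
exists T, s0; split=> // s x ss0 Nx.
have Yx : Y x by exact: subset_closure.
have -> : e = 2 * (e / 2) by rewrite mulrC divfK ?pnatr_eq0.
apply: nbhd_set_perturb (HM T MT x Yx) _; apply: near_flow => // th /andP[th0 _].
exact: traj_le (YN x Yx).1 th th0.
Qed.

End attraction.

Unset Implicit Arguments.
Set Strict Implicit.

Theorem lemma2p4 (R : realType) (n : nat)
  (f : 'rV[R]_n * R -> 'rV[R]_n) (lm lp : R) (L : R -> R) (r : R)
  (Phi : R -> R -> 'rV[R]_n -> 'rV[R]_n) (phi : R -> 'rV[R]_n -> 'rV[R]_n)
  (Am : set 'rV[R]_n) :
  C1 f -> lm < lp -> parameter_shift lm lp L -> 0 < r ->
  solution_cocycle f L r Phi -> autonomous_flow f lm phi ->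
  asymptotically_stable phi Am ->
  exists2 eta0 : R, 0 < eta0 &
    forall eta eta' : R, 0 < eta <= eta0 -> 0 < eta' <= eta0 ->
      forall t : R, pullback_set Phi Am eta t = pullback_set Phi Am eta' t.
Proof.
move=> Cf _ PS r0 SC AF AS. (* lm < lp already follows from parameter_shift. *)
have [eta0 eta0_gt0 absorb] := absorbing_time Cf PS SC AF AS r0.
exists eta0 => // e e' /andP[e0 e_le] /andP[e'0 e'_le] t.
wlog ee' : e e' e0 e'0 e_le e'_le / e <= e' => [hwlog|].
  have [ee'|/ltW e'e] := leP e e'; first exact: hwlog.
  by symmetry; apply: hwlog.
have [T [s0 [T0 absorb_eta]]] := absorb e e' e0 ee' e'_le.
apply/seteqP; split; first exact: pullback_set_le.
exact: pullback_set_absorb (cocycle_comp Cf PS SC) T0 absorb_eta t.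
Qed.
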